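(* For all $n\ge 3$ and $0<k<n-1$, $f(n,k)=f(n,k-1)-f(n-1,k-2)$ (with $f(n-1,-1)=0$).
   Context: A complete non-ambiguous matrix (CNM) of size $n$ is an $n\times n$ matrix $M=(m_{i,j})$ with entries in $\{0,1\}$ whose support $T=\{(i,j): m_{i,j}=1\}$ (whose elements are called vertices) satisfies: (1) $(1,1)\in T$; (2) for every $p=(i,j)\in T$ with $p\neq(1,1)$, exactly one of the following holds: there is $(i',j)\in T$ with $i'<i$, or there is $(i,j')\in T$ with $j'<j$; (3) every row and every column of $M$ contains at least one vertex; (4) define the parent of $p=(i,j)\neq(1,1)$ to be $(i',j)$ with $i'<i$ maximal if such a vertex exists, and otherwise $(i,j')$ with $j'<j$ maximal; then every vertex is the parent of either zero or exactly two vertices. A vertex with no children is a leaf. A CNM of size $n$ is upper-diagonal if its leaves are exactly the positions $(i,n+1-i)$, $1\le i\le n$. For $n\ge 2$ and $0\le k\le n-2$, $f(n,k)$ is the number of upper-diagonal CNMs $M$ of size $n$ with $m_{i,n-i}=0$ for $1\le i\le k$ and $m_{k+1,n-k-1}=1$; $f(n,n-1)$ is the number of upper-diagonal CNMs of size $n$ with $m_{i,n-i}=0$ for all $1\le i\le n-1$; by convention $f(n,-1)=0$. *)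

From mathcomp Require Import all_boot all_order all_algebra.
Set Implicit Arguments. Unset Strict Implicit. Unset Printing Implicit Defensive.

(* Conventions: a 0/1 matrix of size n is represented by its support
   T : {set 'I_n * 'I_n}; positions are 0-indexed, so the paper's (i,j)
   is our (i-1, j-1). *)

Section CNM.
Variable n : nat.
Implicit Types (T : {set 'I_n * 'I_n}) (p q r : 'I_n * 'I_n).

Definition vert T (i j : nat) : bool :=
  [exists p in T, (p.1 == i :> nat) && (p.2 == j :> nat)].

Definition is_root p : bool := (p.1 == 0 :> nat) && (p.2 == 0 :> nat).

Definition has_above T p : bool :=
  [exists q in T, (q.2 == p.2) && (q.1 < p.1)].
Definition has_left T p : bool :=
  [exists q in T, (q.1 == p.1) && (q.2 < p.2)].

Definition parent T q p : bool :=
  [&& p \in T, ~~ is_root p, q \in T &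
   if has_above T p then
     [&& q.2 == p.2, q.1 < p.1 &
      [forall r in T, ~~ [&& r.2 == p.2, q.1 < r.1 & r.1 < p.1]]]
   else
     [&& q.1 == p.1, q.2 < p.2 &
      [forall r in T, ~~ [&& r.1 == p.1, q.2 < r.2 & r.2 < p.2]]]].

Definition nchildren T q : nat := #|[set p in T | parent T q p]|.

Definition cnm T : bool :=
  [&& vert T 0 0,
      [forall p in T, ~~ is_root p ==> (has_above T p (+) has_left T p)],
      [forall i : 'I_n, [exists p in T, p.1 == i]],
      [forall j : 'I_n, [exists p in T, p.2 == j]] &
      [forall q in T, (nchildren T q == 0) || (nchildren T q == 2)]].

(* leaves are exactly the positions (i, n+1-i) (1-indexed), i.e.
   0-indexed positions (r, c) with r + c = n - 1 *)
Definition upper_diag T : bool :=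
  cnm T &&
  [forall p : 'I_n * 'I_n,
     ((p \in T) && (nchildren T p == 0)) == (p.1 + p.2 == n.-1)].

End CNM.

(* f(n,k): the paper's m_{i,n-i} (1-indexed) is the 0-indexed position
   (i-1, n-i-1) = (r, n-2-r) with r = i-1. *)
Definition f (n : nat) (k : int) : nat :=
  match k with
  | Negz _ => 0
  | Posz k =>
    if k < n.-1 then
      #|[set T : {set 'I_n * 'I_n} |
          [&& upper_diag T,
              [forall r : 'I_n, (r < k) ==> ~~ vert T r (n - 2 - r)] &
              vert T k (n - 2 - k)]]|
    else if k == n.-1 then
      #|[set T : {set 'I_n * 'I_n} |
          upper_diag T &&
          [forall r : 'I_n, (r < n.-1) ==> ~~ vert T r (n - 2 - r)]]|
    else 0
  end.

From mathcomp Require Import all_boot all_order all_algebra zify.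
From Stdlib Require Import FunctionalExtensionality.
Set Implicit Arguments. Unset Strict Implicit. Unset Printing Implicit Defensive.

(* Take an upper-diagonal CNM of size m+1 whose first vertex on the
   subdiagonal {(r, m-1-r)} (0-indexed) lies in row k.  Its two neighbours
   (k, m-k) and (k+1, m-1-k) on the antidiagonal are leaves, hence they are
   the two children of (k, m-1-k) and alone in their column and row.
   Deleting that column and that row gives an upper-diagonal CNM of size m
   in which (k, m-1-k) is a leaf, and every antidiagonal leaf of a CNM of
   size m can be grown back in this way.  The bijection turns "no
   subdiagonal vertex in rows < k" into "no subdiagonal vertex in rows
   < k-1", so f(m+1, k) = g(m, k-1), where g(m, j) ([n_subdiag_free m j])
   counts the upper-diagonal CNMs of size m without subdiagonal vertex in
   rows < j.
   Splitting g(m, j) according to row j gives g(m, j) = f(m, j) + g(m, j+1),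
   and the recurrence follows. *)

Section Neighbours.
Variable v : rel nat.

Definition vabove i j := exists2 i', i' < i & v i' j.
Definition vbelow i j := exists2 i', i < i' & v i' j.
Definition vleft i j := exists2 j', j' < j & v i j'.
Definition vright i j := exists2 j', j < j' & v i j'.

End Neighbours.

(* Upper-diagonal CNMs as relations on the naturals, so that matrices of
   different sizes can be compared; see [upper_diagP]. *)
Record ud_rel (N : nat) (v : rel nat) : Prop := UdRel {
  ud_bound : forall i j, v i j -> i < N /\ j < N;
  ud_root : v 0 0;
  ud_above_xor_left :
    forall i j, v i j -> 0 < i + j -> vabove v i j <-> ~ vleft v i j;
  ud_inner : forall i j, v i j -> i + j != N.-1 -> vright v i j /\ vbelow v i j;
  ud_leaf : forall i j, v i j -> i + j = N.-1 -> ~ vright v i j /\ ~ vbelow v i j;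
  ud_antidiag : forall i, i < N -> v i (N.-1 - i) }.

Lemma eq_ud_rel N v1 v2 : v1 =2 v2 -> ud_rel N v1 -> ud_rel N v2.
Proof.
move=> E; have -> // : v1 = v2.
by do 2 apply: functional_extensionality => ?; exact: E.
Qed.

(* [grow k c w] inserts a new row after row k and a new column after
   column c, holding the children (k, c+1) and (k+1, c) of (k, c); [shift]
   and [unshift] translate indices across the inserted lines. *)
Definition shift (h a : nat) : nat := a + (h < a).
Definition unshift (h i : nat) : nat := i - (h.+1 < i).

Definition grow (k c : nat) (w : rel nat) : rel nat := fun i j =>
  [|| (i == k) && (j == c.+1), (i == k.+1) && (j == c) |
      [&& i != k.+1, j != c.+1 & w (unshift k i) (unshift c j)]].

Ltac shift_lia := unfold shift, unshift in *; lia.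

Lemma shiftK h a : unshift h (shift h a) = a.
Proof. shift_lia. Qed.

Lemma unshiftK h i : i != h.+1 -> shift h (unshift h i) = i.
Proof. shift_lia. Qed.

Section Grow.
Variables (k c : nat) (w : rel nat).
Local Notation v := (grow k c w).

Lemma grow_shift a b : v (shift k a) (shift c b) = w a b.
Proof.
have [nk nc] : shift k a != k.+1 /\ shift c b != c.+1 by split; apply/eqP; shift_lia.
by rewrite /grow /= !shiftK nk nc (negbTE nk) (negbTE nc) !andbF.
Qed.

Lemma grow_col i : v i c.+1 = (i == k).
Proof. by rewrite /grow /= eqxx (gtn_eqF (ltnSn c)) !andbF andbT !orbF. Qed.

Lemma grow_row j : v k.+1 j = (j == c).
Proof. by rewrite /grow /= eqxx (gtn_eqF (ltnSn k)) /= orbF. Qed.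

Lemma growP i j : v i j ->
  [\/ i = k /\ j = c.+1, i = k.+1 /\ j = c |
      exists a b, [/\ i = shift k a, j = shift c b & w a b]].
Proof.
case/or3P=> [/andP[/eqP-> /eqP->]|/andP[/eqP-> /eqP->]|/and3P[ni nj wij]].
- by constructor 1.
- by constructor 2.
by constructor 3; exists (unshift k i), (unshift c j); rewrite !unshiftK.
Qed.

Lemma grow_subdiag r : r < k ->
  v r (c + k - r) = (r.+1 < k) && w r (c + k - r.+1).
Proof.
move=> rk; have [nk nk1] : r != k /\ r != k.+1 by split; apply/eqP; lia.
rewrite /grow /= (negbTE nk) (negbTE nk1) /=.
have -> : unshift k r = r by shift_lia.
have [lt|ge] := ltnP r.+1 k.
- have -> : c + k - r != c.+1 by apply/eqP; lia.
  by have -> : unshift c (c + k - r) = c + k - r.+1 by shift_lia.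
- have -> : c + k - r = c.+1 by lia.
  by rewrite eqxx.
Qed.

End Grow.

Lemma grow_at k c w i j a b :
  i = shift k a -> j = shift c b -> grow k c w i j = w a b.
Proof. by move=> -> ->; apply: grow_shift. Qed.

Section GrowLeaf.
Variables (m k c : nat) (w : rel nat).
Hypotheses (kc_antidiag : (k + c).+1 = m) (w_kc : w k c).
Hypotheses (w_kc_nright : ~ vright w k c) (w_kc_nbelow : ~ vbelow w k c).
Local Notation v := (grow k c w).

Lemma grow_kc : v k c.
Proof. by rewrite (@grow_at _ _ _ _ _ k c) //; shift_lia. Qed.

Lemma right_child_neighbours :
  [/\ ~ vabove v k c.+1, vleft v k c.+1, ~ vright v k c.+1 & ~ vbelow v k c.+1].
Proof.
split.
- by case=> i lt; rewrite grow_col => /eqP ei; lia.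
- by exists c; last exact: grow_kc.
- case=> j lt /growP[[_ ej]|[ei ej]|[a [b [ea eb wab]]]]; try lia.
  have ak : a = k by shift_lia.
  by apply: w_kc_nright; exists b; [shift_lia | rewrite -ak].
- by case=> i lt; rewrite grow_col => /eqP ei; lia.
Qed.

Lemma lower_child_neighbours :
  [/\ vabove v k.+1 c, ~ vleft v k.+1 c, ~ vright v k.+1 c & ~ vbelow v k.+1 c].
Proof.
split.
- by exists k; last exact: grow_kc.
- by case=> j lt; rewrite grow_row => /eqP ej; lia.
- by case=> j lt; rewrite grow_row => /eqP ej; lia.
- case=> i lt /growP[[ei ej]|[ei _]|[a [b [ea eb wab]]]]; try lia.
  have bc : b = c by shift_lia.
  by apply: w_kc_nbelow; exists a; [shift_lia | rewrite -bc].
Qed.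

Lemma vabove_shift a b : w a b ->
  vabove v (shift k a) (shift c b) <-> vabove w a b.
Proof.
move=> wab; split.
- case=> i lt /growP[[_ ej]|[ei ej]|[a' [b' [ei ej wab']]]]; first shift_lia.
  + have bc : b = c by shift_lia.
    by exists k; [shift_lia | rewrite bc].
  + have bb : b = b' by shift_lia.
    by exists a'; [shift_lia | rewrite bb].
- by case=> a' lt wa'; exists (shift k a'); [shift_lia | rewrite grow_shift].
Qed.

Lemma vleft_shift a b : w a b ->
  vleft v (shift k a) (shift c b) <-> vleft w a b.
Proof.
move=> wab; split.
- case=> j lt /growP[[ei ej]|[ei _]|[a' [b' [ei ej wab']]]]; last 1 first.
  + have aa : a = a' by shift_lia.
    by exists b'; [shift_lia | rewrite aa].
  + have ak : a = k by shift_lia.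
    by exists c; [shift_lia | rewrite ak].
  + shift_lia.
- by case=> b' lt wb'; exists (shift c b'); [shift_lia | rewrite grow_shift].
Qed.

Lemma vright_shift a b : w a b ->
  vright v (shift k a) (shift c b) <-> vright w a b \/ (a == k) && (b == c).
Proof.
move=> wab; split.
- case=> j lt /growP[[ei ej]|[ei _]|[a' [b' [ei ej wab']]]].
  + have ak : a = k by shift_lia.
    have [bc|bc] := ltnP b c; last by right; apply/andP; split; apply/eqP; shift_lia.
    by left; exists c; rewrite // ak.
  + shift_lia.
  + have aa : a = a' by shift_lia.
    by left; exists b'; [shift_lia | rewrite aa].
- case=> [[b' lt wb']|/andP[/eqP-> /eqP->]].
  + by exists (shift c b'); [shift_lia | rewrite grow_shift].
  + by exists c.+1; [shift_lia | rewrite grow_col; apply/eqP; shift_lia].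
Qed.

Lemma vbelow_shift a b : w a b ->
  vbelow v (shift k a) (shift c b) <-> vbelow w a b \/ (a == k) && (b == c).
Proof.
move=> wab; split.
- case=> i lt /growP[[ei ej]|[ei ej]|[a' [b' [ei ej wab']]]].
  + shift_lia.
  + have bc : b = c by shift_lia.
    have [ak|ak] := ltnP a k; last by right; apply/andP; split; apply/eqP; shift_lia.
    by left; exists k; rewrite // bc.
  + have bb : b = b' by shift_lia.
    by left; exists a'; [shift_lia | rewrite bb].
- case=> [[a' lt wa']|/andP[/eqP-> /eqP->]].
  + by exists (shift k a'); [shift_lia | rewrite grow_shift].
  + by exists k.+1; [shift_lia | rewrite grow_row; apply/eqP; shift_lia].
Qed.

Lemma shift_antidiag a b : ~~ ((a == k) && (b == c)) ->
  (shift k a + shift c b == m) = (a + b == m.-1).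
Proof. by move=> /negP nkc; apply/eqP/eqP; shift_lia. Qed.

Lemma ud_grow_leaf : ud_rel m w -> ud_rel m.+1 v.
Proof.
move=> U; have [rc_nabove rc_left rc_nright rc_nbelow] := right_child_neighbours.
have [lc_above lc_nleft lc_nright lc_nbelow] := lower_child_neighbours.
split.
- move=> i j /growP[[-> ->]|[-> ->]|[a [b [-> -> /(ud_bound U) ab]]]]; shift_lia.
- by rewrite (@grow_at _ _ _ _ _ 0 0) //; exact: ud_root U.
- move=> i j /growP[[-> ->]|[-> ->]|[a [b [-> -> wab]]]] pos; try tauto.
  rewrite vabove_shift // vleft_shift //.
  by apply: (ud_above_xor_left U wab); shift_lia.
- move=> i j /growP[[-> ->]|[-> ->]|[a [b [-> -> wab]]]] /= /eqP ne;
    try (exfalso; lia).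
  rewrite vright_shift // vbelow_shift //.
  have [/andP[/eqP-> /eqP->]|nkc] := boolP ((a == k) && (b == c)).
    by split; right.
  have ab : a + b != m.-1 by rewrite -shift_antidiag //; exact/eqP.
  by have [r bl] := ud_inner U wab ab; split; left.
- move=> i j /growP[[-> ->]|[-> ->]|[a [b [-> -> wab]]]] /= sum; try tauto.
  have nkc : ~~ ((a == k) && (b == c)).
    by apply/negP => /andP[/eqP ea /eqP eb]; shift_lia.
  move/eqP: sum; rewrite shift_antidiag // => /eqP /(ud_leaf U wab).
  by rewrite vright_shift // vbelow_shift //; move/negP: nkc; tauto.
- move=> i /= lti; have [ik|ki|->] := ltngtP i k.
  + rewrite (@grow_at _ _ _ _ _ i (m.-1 - i)); try shift_lia.
    by apply: (ud_antidiag U); lia.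
  + have [->|k1i] := eqVneq i k.+1; first by rewrite grow_row; apply/eqP; lia.
    rewrite (@grow_at _ _ _ _ _ i.-1 (m.-1 - i.-1)); try shift_lia.
    by apply: (ud_antidiag U); lia.
  + have -> : m - k = c.+1 by lia.
    by rewrite grow_col.
Qed.

Lemma ud_of_grow_leaf :
  (forall a b, w a b -> a < m /\ b < m) -> ud_rel m.+1 v -> ud_rel m w.
Proof.
move=> bound U.
have wv a b : w a b -> v (shift k a) (shift c b) by rewrite grow_shift.
split=> //.
- by rewrite -(grow_shift k c w 0 0); exact: ud_root U.
- move=> a b wab pos; rewrite -vabove_shift // -vleft_shift //.
  by apply: (ud_above_xor_left U (wv _ _ wab)); shift_lia.
- move=> a b wab ab.
  have [/andP[/eqP ea /eqP eb]|nkc] := boolP ((a == k) && (b == c)).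
    by exfalso; move/eqP: ab; lia.
  rewrite -shift_antidiag // in ab.
  have [] := ud_inner U (wv _ _ wab) ab.
  by rewrite vright_shift // vbelow_shift //; move/negP: nkc; tauto.
- move=> a b wab ab.
  have [/andP[/eqP-> /eqP->]|nkc] := boolP ((a == k) && (b == c)); first by split.
  move/eqP: ab; rewrite -shift_antidiag // => /eqP /(ud_leaf U (wv _ _ wab)).
  by rewrite vright_shift // vbelow_shift //; tauto.
- move=> i im; have [->|ik] := eqVneq i k; first by have -> : m.-1 - k = c by lia.
  rewrite -(grow_shift k c) (_ : shift c (m.-1 - i) = m - shift k i); last by shift_lia.
  by apply: (ud_antidiag U); shift_lia.
Qed.

End GrowLeaf.

Lemma ud_grow m k w : k < m -> ud_rel m w -> ud_rel m.+1 (grow k (m.-1 - k) w).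
Proof.
move=> km U; have kc : (k + (m.-1 - k)).+1 = m by lia.
have w_kc := ud_antidiag U km.
have [nr nb] : ~ vright w k (m.-1 - k) /\ ~ vbelow w k (m.-1 - k).
  by apply: (ud_leaf U w_kc); lia.
exact: ud_grow_leaf kc w_kc nr nb U.
Qed.

Definition shrink m k c (v : rel nat) : rel nat :=
  fun a b => [&& a < m, b < m & v (shift k a) (shift c b)].

Section Shrink.
Variables (m k : nat) (v : rel nat).
Hypotheses (km : k < m) (U : ud_rel m.+1 v) (v_kc : v k (m.-1 - k)).
Local Notation c := (m.-1 - k).
Local Notation w := (shrink m k c v).

Let v_right_child : v k c.+1.
Proof. by have := ud_antidiag U (leqW km); rewrite /= (_ : m - k = c.+1) //; lia. Qed.

Let v_lower_child : v k.+1 c.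
Proof. by have := @ud_antidiag _ _ U k.+1; rewrite ltnS (_ : m - k.+1 = c) //; lia. Qed.

Let right_child_leaf : ~ vright v k c.+1 /\ ~ vbelow v k c.+1.
Proof. by apply: (ud_leaf U v_right_child) => /=; lia. Qed.

Let lower_child_leaf : ~ vright v k.+1 c /\ ~ vbelow v k.+1 c.
Proof. by apply: (ud_leaf U v_lower_child) => /=; lia. Qed.

Lemma grow_shrink : v =2 grow k c w.
Proof.
have col_c1 i : v i c.+1 -> i = k.
  move=> vi; have [ik|ki|//] := ltngtP i k; last by case: right_child_leaf.2; exists i.
  have /(ud_above_xor_left U v_right_child) : vabove v k c.+1 by exists i.
  by case; [lia | exists c].
have row_k1 j : v k.+1 j -> j = c.
  move=> vj; have [jc|cj|//] := ltngtP j c; last by case: lower_child_leaf.1; exists j.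
  have : vabove v k.+1 c by exists k.
  by move/(ud_above_xor_left U v_lower_child); case; [lia | exists j].
move=> i j; have [->|ik1] := eqVneq i k.+1.
  by rewrite grow_row; apply/idP/eqP => [/row_k1|->].
have [->|jc1] := eqVneq j c.+1.
  by rewrite grow_col; apply/idP/eqP => [/col_c1|->].
rewrite /grow /shrink /= (negbTE ik1) (negbTE jc1) !unshiftK //= andbF.
apply/idP/idP => [vij | /and3P[_ _ //]].
by have [bi bj] := ud_bound U vij; rewrite vij andbT; apply/andP; split; shift_lia.
Qed.

Lemma ud_shrink : ud_rel m w.
Proof.
have kc : (k + c).+1 = m by lia.
have shiftnn h : shift h h = h by shift_lia.
have w_kc : w k c by rewrite /shrink km !shiftnn v_kc andbT; lia.
have nr : ~ vright w k c.
  case=> b cb /and3P[_ _]; rewrite shiftnn => vb.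
  by case: right_child_leaf.1; exists (shift c b) => //; shift_lia.
have nb : ~ vbelow w k c.
  case=> a ka /and3P[_ _]; rewrite shiftnn => va.
  by case: lower_child_leaf.2; exists (shift k a) => //; shift_lia.
apply: (ud_of_grow_leaf kc w_kc nr nb); first by move=> a b /and3P[].
exact: eq_ud_rel grow_shrink U.
Qed.

End Shrink.

Section Vertices.
Variable n : nat.
Implicit Types (T : {set 'I_n * 'I_n}) (p q : 'I_n * 'I_n).

Lemma ord_pair_inj p q : (p.1 : nat) = q.1 -> (p.2 : nat) = q.2 -> p = q.
Proof. by case: p q => [a b] [a' b'] /= /val_inj-> /val_inj->. Qed.

Lemma vertP T i j :
  reflect (exists2 p, p \in T & (p.1 : nat) = i /\ (p.2 : nat) = j) (vert T i j).
Proof.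
apply: (iffP existsP) => [[p /andP[pT /andP[/eqP e1 /eqP e2]]]|[p pT [e1 e2]]].
  by exists p.
by exists p; rewrite pT e1 e2 !eqxx.
Qed.

Lemma vert_pair T p : vert T p.1 p.2 = (p \in T).
Proof.
apply/vertP/idP => [[q qT [e1 e2]]|pT]; last by exists p.
by rewrite (ord_pair_inj (p := p) (q := q)).
Qed.

Lemma vert_bound T i j : vert T i j -> i < n /\ j < n.
Proof. by case/vertP=> p _ [<- <-]. Qed.

Lemma has_aboveP T p : reflect (vabove (vert T) p.1 p.2) (has_above T p).
Proof.
apply: (iffP existsP) => [[q /and3P[qT /eqP e2 lt]]|[i lt /vertP[q qT [e1 e2]]]].
  by exists q.1; rewrite // -e2 vert_pair.
by exists q; rewrite qT e1 lt andbT; apply/eqP/val_inj.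
Qed.

Lemma has_leftP T p : reflect (vleft (vert T) p.1 p.2) (has_left T p).
Proof.
apply: (iffP existsP) => [[q /and3P[qT /eqP e1 lt]]|[j lt /vertP[q qT [e1 e2]]]].
  by exists q.2; rewrite // -e1 vert_pair.
by exists q; rewrite qT e2 lt andbT; apply/eqP/val_inj.
Qed.

End Vertices.

Section Children.
Variables (n : nat) (T : {set 'I_n * 'I_n}) (q : 'I_n * 'I_n).
Hypothesis qT : q \in T.
Hypothesis above_xor_left :
  forall p, p \in T -> ~~ is_root p -> has_above T p (+) has_left T p.
Local Notation children := [set p in T | parent T q p].

Lemma child_below p : parent T q p -> has_above T p -> vbelow (vert T) q.1 q.2.
Proof.
case/and4P=> pT _ _ + ha; rewrite ha => /and3P[/eqP e2 lt _].
by exists p.1; rewrite // e2 vert_pair.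
Qed.

Lemma child_right p : parent T q p -> ~~ has_above T p -> vright (vert T) q.1 q.2.
Proof.
case/and4P=> pT _ _ + ha; rewrite (negbTE ha) => /and3P[/eqP e1 lt _].
by exists p.2; rewrite // e1 vert_pair.
Qed.

Lemma children_inj p1 p2 : parent T q p1 -> parent T q p2 ->
  has_above T p1 = has_above T p2 -> p1 = p2.
Proof.
case/and4P=> p1T _ _ H1 /and4P[p2T _ _ H2] E.
case: (boolP (has_above T p1)) => ha.
- move: H1 H2; rewrite -E ha.
  move=> /and3P[/eqP e1 l1 /forallP F1] /and3P[/eqP e2 l2 /forallP F2].
  apply: ord_pair_inj; last by rewrite -e1 -e2.
  case: (ltngtP p1.1 p2.1) => // h.
  + by have := F2 p1; rewrite p1T -e1 e2 eqxx l1 h.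
  + by have := F1 p2; rewrite p2T -e2 e1 eqxx l2 h.
- move: H1 H2; rewrite -E (negbTE ha).
  move=> /and3P[/eqP e1 l1 /forallP F1] /and3P[/eqP e2 l2 /forallP F2].
  apply: ord_pair_inj; first by rewrite -e1 -e2.
  case: (ltngtP p1.2 p2.2) => // h.
  + by have := F2 p1; rewrite p1T -e1 e2 eqxx l1 h.
  + by have := F1 p2; rewrite p2T -e2 e1 eqxx l2 h.
Qed.

Lemma lower_child_exists :
  vbelow (vert T) q.1 q.2 -> exists2 p, parent T q p & has_above T p.
Proof.
case=> i0 lt0 v0.
have exP : exists i, (q.1 < i) && vert T i q.2 by exists i0; rewrite lt0 v0.
case: (ex_minnP exP) => i /andP[l /vertP[p pT [e1 e2]]] min_i.
have ha : has_above T p by apply/has_aboveP; exists q.1; rewrite ?e1 // e2 vert_pair.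
exists p => //; rewrite /parent pT qT ha /=; apply/andP; split.
  by rewrite /is_root e1; apply/negP => /andP[/eqP iz _]; lia.
apply/and3P; split; [by apply/eqP/val_inj; rewrite /= e2 | by rewrite e1 |].
apply/forallP => r; apply/implyP => rT; apply/negP => /and3P[/eqP er l1 l2].
have : (q.1 < r.1) && vert T r.1 q.2 by rewrite l1 -e2 -er vert_pair.
by move/min_i; rewrite -e1 leqNgt l2.
Qed.

Lemma right_child_exists :
  vright (vert T) q.1 q.2 -> exists2 p, parent T q p & ~~ has_above T p.
Proof.
case=> j0 lt0 v0.
have exP : exists j, (q.2 < j) && vert T q.1 j by exists j0; rewrite lt0 v0.
case: (ex_minnP exP) => j /andP[l /vertP[p pT [e1 e2]]] min_j.
have hl : has_left T p by apply/has_leftP; exists q.2; rewrite ?e2 // e1 vert_pair.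
have nr : ~~ is_root p by rewrite /is_root e2; apply/negP => /andP[_ /eqP jz]; lia.
have ha : ~~ has_above T p by move: (above_xor_left pT nr); rewrite hl addbT.
exists p => //; rewrite /parent pT qT nr (negbTE ha) /=.
apply/and3P; split; [by apply/eqP/val_inj; rewrite /= e1 | by rewrite e2 |].
apply/forallP => r; apply/implyP => rT; apply/negP => /and3P[/eqP er l1 l2].
have : (q.2 < r.2) && vert T q.1 r.2 by rewrite l1 -e1 -er vert_pair.
by move/min_j; rewrite -e2 leqNgt l2.
Qed.

Lemma in_children p : (p \in children) = parent T q p.
Proof. by rewrite inE andb_idl // => /and4P[]. Qed.

Lemma nchildren0P :
  nchildren T q = 0 <-> ~ vright (vert T) q.1 q.2 /\ ~ vbelow (vert T) q.1 q.2.
Proof.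
rewrite /nchildren; split.
- move/eqP; rewrite cards_eq0 => /eqP S0.
  by split=> [/right_child_exists|/lower_child_exists] [p];
    rewrite -in_children S0 in_set0.
- case=> nR nB; apply/eqP; rewrite cards_eq0; apply/eqP/setP => p.
  rewrite in_set0 in_children; apply/negP => pp.
  by case: (boolP (has_above T p)) => h; [apply: nB; apply: child_below pp h
                                        | apply: nR; apply: child_right pp h].
Qed.

Lemma nchildren2P :
  nchildren T q = 2 <-> vright (vert T) q.1 q.2 /\ vbelow (vert T) q.1 q.2.
Proof.
rewrite /nchildren; split.
- move=> c2; have : 1 < #|children| by rewrite c2.
  case/card_gt1P => x [y [+ + nxy]]; rewrite !in_children => xq yq.
  case: (boolP (has_above T x)) => hx; case: (boolP (has_above T y)) => hy.
  + by case/eqP: nxy; apply: children_inj; rewrite ?hx ?hy.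
  + by split; [exact: child_right yq hy | exact: child_below xq hx].
  + by split; [exact: child_right xq hx | exact: child_below yq hy].
  + by case/eqP: nxy; apply: children_inj; rewrite // (negbTE hx) (negbTE hy).
- case=> /right_child_exists[pr qpr hr] /lower_child_exists[pb qpb hb].
  have -> : children = [set pb; pr].
    apply/setP => p; rewrite in_children !inE.
    apply/idP/orP => [qp|]; last by case=> /eqP ->.
    case: (boolP (has_above T p)) => h; [left|right]; apply/eqP; apply: children_inj => //.
    + by rewrite h hb.
    + by rewrite (negbTE h) (negbTE hr).
  by rewrite cards2; case: eqP => // e; move: hr; rewrite -e hb.
Qed.

End Children.

Section UpperDiagonal.
Variables (n : nat) (T : {set 'I_n * 'I_n}).

Lemma upper_diag_ud : upper_diag T -> ud_rel n (vert T).
Proof.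
case/andP=> /and5P[v00 /forallP X _ _ /forallP C] /forallP L.
have xorT p : p \in T -> ~~ is_root p -> has_above T p (+) has_left T p.
  by move=> pT nr; move: (X p); rewrite pT nr.
have leaf_antidiag p : p \in T -> (nchildren T p == 0) = (p.1 + p.2 == n.-1).
  by move=> pT; move: (L p); rewrite pT => /eqP.
split => //.
- exact: vert_bound.
- move=> i j /vertP[p pT [<- <-]] pos.
  have nr : ~~ is_root p.
    by rewrite /is_root; apply/negP => /andP[/eqP e1 /eqP e2]; rewrite e1 e2 in pos.
  by move: (xorT p pT nr); case: has_aboveP; case: has_leftP => //=; tauto.
- move=> i j /vertP[p pT [<- <-]] ne.
  have : nchildren T p != 0 by rewrite leaf_antidiag.
  by move: (C p); rewrite pT => /orP[/eqP-> // | /eqP/(nchildren2P pT xorT)].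
- move=> i j /vertP[p pT [<- <-]] /eqP e.
  by apply/(nchildren0P pT xorT)/eqP; rewrite leaf_antidiag.
- move=> i lti; have ltj : n.-1 - i < n by lia.
  have := L (Ordinal lti, Ordinal ltj); rewrite /=.
  have -> : i + (n.-1 - i) = n.-1 by lia.
  by rewrite eqxx => /eqP/andP[pT _]; apply/vertP; exists (Ordinal lti, Ordinal ltj).
Qed.

Lemma ud_upper_diag : ud_rel n (vert T) -> upper_diag T.
Proof.
move=> U; have xorT p : p \in T -> ~~ is_root p -> has_above T p (+) has_left T p.
  move=> pT nr; have pos : 0 < p.1 + p.2.
    by move: nr; rewrite /is_root; case: (p.1 : nat); case: (p.2 : nat).
  have := ud_above_xor_left U (_ : vert T p.1 p.2) pos; rewrite vert_pair => /(_ pT).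
  by case: has_aboveP; case: has_leftP => //=; tauto.
have leaf_antidiag p : p \in T -> (nchildren T p == 0) = (p.1 + p.2 == n.-1).
  move=> pT; have vp : vert T p.1 p.2 by rewrite vert_pair.
  have [s|s] := eqVneq (p.1 + p.2) n.-1.
  + by apply/eqP/(nchildren0P pT xorT); exact: (ud_leaf U vp s).
  + by rewrite ((nchildren2P pT xorT).2 (ud_inner U vp s)).
apply/andP; split.
  apply/and5P; split.
  + exact: (ud_root U).
  + by apply/forallP => p; apply/implyP => pT; apply/implyP; exact: xorT.
  + apply/forallP => i; have /vertP[p pT [e1 _]] := ud_antidiag U (ltn_ord i).
    by apply/existsP; exists p; rewrite pT; apply/eqP/val_inj.
  + apply/forallP => j; have lt : n.-1 - j < n by have := ltn_ord j; lia.
    have := ud_antidiag U lt; rewrite subKn; last by have := ltn_ord j; lia.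
    by case/vertP=> p pT [_ e2]; apply/existsP; exists p; rewrite pT; apply/eqP/val_inj.
  + apply/forallP => q; apply/implyP => qT; rewrite leaf_antidiag //.
    have [s|s] := eqVneq (q.1 + q.2) n.-1 => //=.
    by rewrite ((nchildren2P qT xorT).2 (ud_inner U _ s)) // vert_pair.
apply/forallP => p; case: (boolP (p \in T)) => pT /=; first by rewrite leaf_antidiag.
rewrite eq_sym eqbF_neg; apply/eqP => s; have := ud_antidiag U (ltn_ord p.1).
by rewrite -s addKn vert_pair (negbTE pT).
Qed.

Lemma upper_diagP : upper_diag T <-> ud_rel n (vert T).
Proof. by split; [exact: upper_diag_ud | exact: ud_upper_diag]. Qed.

End UpperDiagonal.

Definition rel_set n (v : rel nat) : {set 'I_n * 'I_n} :=
  [set p : 'I_n * 'I_n | v p.1 p.2].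

Lemma vert_rel_set n v i j : vert (rel_set n v) i j = [&& i < n, j < n & v i j].
Proof.
apply/vertP/and3P => [[p]|[i_n j_n vij]]; first by rewrite inE => vp [<- <-].
by exists (Ordinal i_n, Ordinal j_n); rewrite ?inE.
Qed.

Lemma vert_rel_set_bounded n (v : rel nat) :
  (forall i j, v i j -> i < n /\ j < n) -> vert (rel_set n v) = v.
Proof.
move=> bnd; do 2 apply: functional_extensionality => ?.
rewrite vert_rel_set; apply/and3P/idP => [[] // | vij].
by have [? ?] := bnd _ _ vij.
Qed.

Lemma eq_vert_set n (T1 T2 : {set 'I_n * 'I_n}) : vert T1 =2 vert T2 -> T1 = T2.
Proof. by move=> E; apply/setP => p; rewrite -!vert_pair E. Qed.

Definition subdiag_free n k (T : {set 'I_n * 'I_n}) : bool :=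
  [forall r : 'I_n, (r < k) ==> ~~ vert T r (n - 2 - r)].

Lemma subdiag_freeP n k (T : {set 'I_n * 'I_n}) :
  reflect (forall r, r < k -> ~~ vert T r (n - 2 - r)) (subdiag_free k T).
Proof.
apply: (iffP forallP) => [F r rk | F r]; last by apply/implyP; apply: F.
have [rn|nr] := ltnP r n; first by have := F (Ordinal rn); rewrite /= rk.
by apply/negP => /vert_bound []; rewrite ltnNge nr.
Qed.

Lemma subdiag_freeS n k (T : {set 'I_n * 'I_n}) :
  subdiag_free k.+1 T = subdiag_free k T && ~~ vert T k (n - 2 - k).
Proof.
apply/subdiag_freeP/andP => [F | [/subdiag_freeP F nv] r].
  by split; [apply/subdiag_freeP => r rk; apply: F; lia | exact: F].
by rewrite ltnS leq_eqVlt => /orP[/eqP-> // | /F].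
Qed.

Definition n_subdiag_free n k :=
  #|[set T : {set 'I_n * 'I_n} | upper_diag T && subdiag_free k T]|.

Lemma f_subdiag n k : k < n.-1 ->
  f n k = #|[set T : {set 'I_n * 'I_n} |
             [&& upper_diag T, subdiag_free k T & vert T k (n - 2 - k)]]|.
Proof. by move=> kn; rewrite /f kn. Qed.

Lemma n_subdiag_free_split n k :
  k < n.-1 -> n_subdiag_free n k = f n k + n_subdiag_free n k.+1.
Proof.
move=> kn; rewrite f_subdiag // /n_subdiag_free.
rewrite -(cardsID [set T : {set 'I_n * 'I_n} | vert T k (n - 2 - k)]).
congr (_ + _); apply: eq_card => T; rewrite !inE ?subdiag_freeS;
  by case: (upper_diag T); case: (subdiag_free k T); case: (vert T k _).
Qed.

Section GrowSet.
Variables m k : nat.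
Hypothesis km : k < m.
Local Notation c := (m.-1 - k).

Definition grow_set (T : {set 'I_m * 'I_m}) : {set 'I_m.+1 * 'I_m.+1} :=
  rel_set m.+1 (grow k c (vert T)).

Definition shrink_set (T : {set 'I_m.+1 * 'I_m.+1}) : {set 'I_m * 'I_m} :=
  rel_set m (shrink m k c (vert T)).

Lemma grow_setK : cancel grow_set shrink_set.
Proof.
move=> T; apply: eq_vert_set => a b.
rewrite !vert_rel_set /shrink vert_rel_set grow_shift.
case: (boolP (vert T a b)) => [vab|_]; last by rewrite !andbF.
by have [am bm] := vert_bound vab; rewrite am bm !andbT /=; apply/andP; split; shift_lia.
Qed.

Lemma shrink_setK T : upper_diag T -> vert T k c -> grow_set (shrink_set T) = T.
Proof.
move=> /upper_diagP U vkc; apply: eq_vert_set => i j.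
rewrite /grow_set /shrink_set (@vert_rel_set_bounded m); last by move=> a b /and3P[].
rewrite vert_rel_set -(grow_shrink km U vkc).
by case: (boolP (vert T i j)) => [/vert_bound[-> ->] | _]; rewrite ?andbF.
Qed.

Lemma upper_diag_grow_set T : upper_diag T -> upper_diag (grow_set T).
Proof.
move=> /upper_diagP U; have U' := ud_grow km U; apply/upper_diagP.
by rewrite /grow_set vert_rel_set_bounded //; exact: (ud_bound U').
Qed.

Lemma upper_diag_shrink_set T :
  upper_diag T -> vert T k c -> upper_diag (shrink_set T).
Proof.
move=> /upper_diagP U vkc; apply/upper_diagP.
rewrite /shrink_set vert_rel_set_bounded; last by move=> a b /and3P[].
exact: ud_shrink km U vkc.
Qed.

Lemma vert_grow_set_subdiag T r : r < k ->
  vert (grow_set T) r (m.+1 - 2 - r) = (r.+1 < k) && vert T r (m - 2 - r).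
Proof.
move=> rk; rewrite vert_rel_set (_ : m.+1 - 2 - r = c + k - r); last by lia.
rewrite grow_subdiag // (_ : c + k - r.+1 = m - 2 - r); last by lia.
have -> : r < m.+1 by lia.
by have -> : c + k - r < m.+1 by lia.
Qed.

Lemma card_grow_set : f m.+1 k = n_subdiag_free m k.-1.
Proof.
rewrite f_subdiag; last by lia.
rewrite /n_subdiag_free -(card_imset _ (can_inj grow_setK)).
apply: eq_card => T; rewrite inE; apply/and3P/imsetP.
- case=> ud /subdiag_freeP sf; rewrite (_ : m.+1 - 2 - k = c); last by lia.
  move=> vkc; exists (shrink_set T); last by rewrite shrink_setK.
  rewrite inE upper_diag_shrink_set //=; apply/subdiag_freeP => r rk.
  have rk1 : r.+1 < k by lia.
  have := sf r (ltnW rk1); rewrite -{1}(shrink_setK ud vkc).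
  by rewrite vert_grow_set_subdiag ?rk1 //; lia.
- case=> T' /[!inE] /andP[ud /subdiag_freeP sf] ->; split.
  + exact: upper_diag_grow_set.
  + apply/subdiag_freeP => r rk; rewrite vert_grow_set_subdiag //.
    by case: ltnP => //= rk1; apply: sf; lia.
  + rewrite vert_rel_set (@grow_at _ _ _ _ _ k c); try shift_lia.
    have /upper_diagP U := ud.
    by rewrite (ud_antidiag U km) andbT; apply/andP; split; lia.
Qed.

End GrowSet.

Unset Implicit Arguments.
Import GRing.Theory.
Local Open Scope ring_scope.

Theorem lemma4p8 (n k : nat) :
  (3 <= n)%N -> (0 < k)%N -> (k < n.-1)%N ->
  (f n k%:Z)%:Z = (f n (k%:Z - 1))%:Z - (f n.-1 (k%:Z - 2))%:Z.
Proof.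
case: n => [//|m] _; case: k => [//|k] _; rewrite [m.+1.-1]/= => km.
have -> : k.+1%:Z - 1 = k by rewrite -addn1 PoszD addrK.
rewrite !card_grow_set //=; last exact: ltnW.
(* For k = 1 both sides reduce to g(m, 0), since 0.-1 = 0 and f m (-1) = 0. *)
case: k km => [|j] km; first by rewrite subr0.
have -> : j.+2%:Z - 2 = j by rewrite -addn2 PoszD addrK.
rewrite [j.+1.-1]/= (@n_subdiag_free_split m j); last by lia.
by rewrite PoszD addrC addKr.
Qed.
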